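(* Let $\Omega\subseteq\mathbb{R}$ and fix $t\in\mathbb{N}$. Let $f^t,f^{t+1}:\Omega\to\mathbb{R}$ be continuously differentiable and strictly convex, and suppose that for all $z\in\Omega$: (i) $(f^t)'$ is differentiable and concave (at $z$), and (ii) $(f^{t+1})'(z)\le(f^t)'(z)$. Then for any $x,m\in\Omega$ with $x\le m$ and any $y,n\in\Omega$ such that $(f^{t+1})'(y)-(f^t)'(x)=(f^{t+1})'(n)-(f^t)'(m)=\xi$ for a fixed scalar $\xi$, we have $D^{t,t+1}(x,y)\le D^{t,t+1}(m,n)$.
   Context: The skewed Bregman divergence is $D^{t,t+1}(u,v)=f^t(u)-f^{t+1}(v)-(u-v)\,(f^{t+1})'(v)$. *)

From Stdlib Require Import Reals.
From Coquelicot Require Import Coquelicot.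
Open Scope R_scope.

Definition is_interval (Omega : R -> Prop) : Prop :=
  forall a b c, Omega a -> Omega c -> a <= b -> b <= c -> Omega b.

Definition strictly_convex_on (Omega : R -> Prop) (F : R -> R) : Prop :=
  forall a b l, Omega a -> Omega b -> a <> b -> 0 < l < 1 ->
    F (l * a + (1 - l) * b) < l * F a + (1 - l) * F b.

Definition concave_on (Omega : R -> Prop) (G : R -> R) : Prop :=
  forall a b l, Omega a -> Omega b -> 0 <= l <= 1 ->
    l * G a + (1 - l) * G b <= G (l * a + (1 - l) * b).

Definition C1_on (Omega : R -> Prop) (F : R -> R) : Prop :=
  forall z, Omega z -> ex_derive F z /\ continuous (Derive F) z.

Definition skewD (f : nat -> R -> R) (t : nat) (u v : R) : R :=
  f t u - f (S t) v - (u - v) * Derive (f (S t)) v.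

(* Write g = (f^t)' and h = (f^{t+1})'. Moving u from x to m while choosing v
   with h(v) = g(u) + xi, the divergence D(u, v) formally has derivative
   -xi + (v - u) g'(u) >= g(u) - g(v) + (v - u) g'(u) >= 0, using h <= g and
   then the concavity of g. Since v need not depend differentiably on u, the
   argument is discretized: on a uniform grid of [x, m] with step d, tangent
   inequalities for f^t, f^{t+1} together with h <= g and the concavity and
   monotonicity of g bound each increment of D from below by
   -2 d (g(u_{k+1}) - g(u_k)). These defects telescope to -2 d (g(m) - g(x)),
   which vanishes as d -> 0. The points v exist by the intermediate value
   theorem for the continuous h. *)

From Stdlib Require Import Reals Lra Lia.
From Coquelicot Require Import Coquelicot.
Open Scope R_scope.

Definition convex_on (Omega : R -> Prop) (F : R -> R) : Prop :=
  forall a b l, Omega a -> Omega b -> 0 <= l <= 1 ->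
    F (l * a + (1 - l) * b) <= l * F a + (1 - l) * F b.

Lemma strictly_convex_on_convex_on (Omega : R -> Prop) (F : R -> R) :
  strictly_convex_on Omega F -> convex_on Omega F.
Proof.
  intros Hsc a b l Ha Hb Hl.
  destruct (Req_dec a b) as [<-|Hab].
  { replace (l * a + (1 - l) * a) with a by ring; lra. }
  destruct (Req_dec l 0) as [->|Hl0].
  { replace (0 * a + (1 - 0) * b) with b by ring; lra. }
  destruct (Req_dec l 1) as [->|Hl1].
  { replace (1 * a + (1 - 1) * b) with a by ring; lra. }
  apply Rlt_le, Hsc; auto; lra.
Qed.

Lemma is_derive_le_of_chord_le (phi : R -> R) (d c : R) :
  is_derive phi 0 d ->
  (forall s, 0 < s < 1 -> phi s - phi 0 <= s * c) -> d <= c.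
Proof.
  intros Hd Hchord.
  destruct (Rle_or_lt d c) as [|Hcd]; [assumption|exfalso].
  apply is_derive_Reals in Hd.
  destruct (Hd (d - c) ltac:(lra)) as [[delta Hdelta] Hclose]; simpl in Hclose.
  set (s := Rmin (1 / 2) (delta / 2)).
  assert (Hs : 0 < s < 1).
  { unfold s; split; [apply Rmin_glb_lt; lra|].
    pose proof (Rmin_l (1 / 2) (delta / 2)); lra. }
  assert (Hsd : Rabs s < delta).
  { rewrite Rabs_pos_eq by lra.
    pose proof (Rmin_r (1 / 2) (delta / 2)); unfold s in *; lra. }
  specialize (Hclose s ltac:(lra) Hsd).
  rewrite Rplus_0_l in Hclose.
  apply Rabs_def2 in Hclose as [_ Hlow].
  assert (Hq : c < (phi s - phi 0) / s) by lra.
  apply (Rmult_lt_compat_r s) in Hq; [|lra].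
  replace ((phi s - phi 0) / s * s) with (phi s - phi 0) in Hq by (field; lra).
  specialize (Hchord s Hs); lra.
Qed.

Lemma convex_tangent_le (Omega : R -> Prop) (F : R -> R) (a b : R) :
  convex_on Omega F -> Omega a -> Omega b -> ex_derive F a ->
  F a + Derive F a * (b - a) <= F b.
Proof.
  intros Hconv Ha Hb Hder.
  set (phi := fun s => F (a + s * (b - a))).
  assert (Hphi : is_derive phi 0 ((b - a) * Derive F a)).
  { apply (is_derive_comp F (fun s => a + s * (b - a))).
    - rewrite Rmult_0_l, Rplus_0_r. now apply Derive_correct.
    - auto_derive; [easy|ring]. }
  enough ((b - a) * Derive F a <= F b - F a) by lra.
  apply (is_derive_le_of_chord_le phi); [exact Hphi|].
  intros s Hs. unfold phi.
  rewrite Rmult_0_l, Rplus_0_r.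
  replace (a + s * (b - a)) with (s * b + (1 - s) * a) by ring.
  pose proof (Hconv b a s Hb Ha ltac:(lra)); lra.
Qed.

Lemma convex_Derive_le (Omega : R -> Prop) (F : R -> R) (a b : R) :
  convex_on Omega F -> Omega a -> Omega b -> ex_derive F a -> ex_derive F b ->
  a <= b -> Derive F a <= Derive F b.
Proof.
  intros Hconv Ha Hb Hda Hdb Hab.
  pose proof (convex_tangent_le Omega F a b Hconv Ha Hb Hda).
  pose proof (convex_tangent_le Omega F b a Hconv Hb Ha Hdb).
  destruct (Req_dec a b) as [->|Hne]; nra.
Qed.

Lemma concave_chord_le (Omega : R -> Prop) (G : R -> R) (p q r : R) :
  concave_on Omega G -> Omega p -> Omega r -> p <= q -> q <= r ->
  (r - q) * G p + (q - p) * G r <= (r - p) * G q.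
Proof.
  intros Hconc Hp Hr Hpq Hqr.
  destruct (Req_dec p r) as [<-|Hpr].
  { replace q with p by lra; lra. }
  set (l := (r - q) / (r - p)).
  assert (Hl : 0 <= l <= 1).
  { unfold l; split; [apply Rdiv_le_0_compat; lra|].
    apply Rmult_le_reg_r with (r - p); [lra|]. field_simplify; lra. }
  pose proof (Hconc p r l Hp Hr Hl) as H.
  replace (l * p + (1 - l) * r) with q in H by (unfold l; field; lra).
  apply (Rmult_le_compat_l (r - p)) in H; [|lra].
  replace ((r - p) * (l * G p + (1 - l) * G r))
    with ((r - q) * G p + (q - p) * G r) in H by (unfold l; field; lra).
  exact H.
Qed.

Lemma concave_nondecreasing_increment_le (Omega : R -> Prop) (G : R -> R)
    (u1 u2 v : R) :
  concave_on Omega G ->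
  (forall a b, Omega a -> Omega b -> a <= b -> G a <= G b) ->
  Omega u1 -> Omega u2 -> Omega v -> u1 <= u2 ->
  (G v - G u1) * (u2 - u1) <= (v - u1 + (u2 - u1)) * (G u2 - G u1).
Proof.
  intros Hconc Hmono Hu1 Hu2 Hv Hu.
  assert (G u1 <= G u2) by auto.
  destruct (Rle_or_lt u2 v) as [Hv2|Hv2].
  { pose proof (concave_chord_le Omega G u1 u2 v Hconc Hu1 Hv Hu Hv2); nra. }
  destruct (Rle_or_lt v u1) as [Hv1|Hv1].
  { pose proof (concave_chord_le Omega G v u1 u2 Hconc Hv Hu2 Hv1 Hu); nra. }
  assert (G v <= G u2) by (apply Hmono; auto; lra).
  nra.
Qed.

Lemma interval_IVT (Omega : R -> Prop) (h : R -> R) (p q c : R) :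
  is_interval Omega -> (forall z, Omega z -> continuous h z) ->
  Omega p -> Omega q -> h p <= c <= h q ->
  exists v, Omega v /\ h v = c.
Proof.
  intros HOmega Hcont Hp Hq Hc.
  destruct (Req_dec (h p) c) as [<-|Hpc]; [now exists p|].
  destruct (Req_dec (h q) c) as [<-|Hqc]; [now exists q|].
  assert (Hcont_pt : forall a b, Omega a -> Omega b -> forall z, a <= z <= b ->
            continuity_pt h z /\ Omega z).
  { intros a b Ha Hb z Hz.
    assert (Hz' : Omega z) by (apply (HOmega a z b); tauto).
    split; [apply continuity_pt_filterlim, Hcont|]; exact Hz'. }
  destruct (Rtotal_order p q) as [Hlt|[<-|Hgt]]; [| lra |].
  - destruct (Ranalysis5.IVT_interv (fun z => h z - c) p q) as [v [Hv Hhv]];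
      [|lra|lra|lra|].
    { intros z Hz. apply continuity_pt_minus; [apply (Hcont_pt p q); auto|].
      apply continuity_pt_const. now intros ? ?. }
    exists v. split; [apply (Hcont_pt p q Hp Hq v Hv)|lra].
  - destruct (Ranalysis5.IVT_interv (fun z => c - h z) q p) as [v [Hv Hhv]];
      [|lra|lra|lra|].
    { intros z Hz. apply continuity_pt_minus; [|apply (Hcont_pt q p); auto].
      apply continuity_pt_const. now intros ? ?. }
    exists v. split; [apply (Hcont_pt q p Hq Hp v Hv)|lra].
Qed.

Lemma Rle_of_forall_sub_div_INR (x y c : R) :
  (forall N, (0 < N)%nat -> x - c / INR N <= y) -> x <= y.
Proof.
  intros H.
  destruct (Rle_or_lt x y) as [|Hyx]; [assumption|exfalso].
  assert (Hc : 0 < Rabs c + 1) by (pose proof (Rabs_pos c); lra).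
  destruct (archimed_cor1 ((x - y) / (Rabs c + 1))) as [N [HN HN0]].
  { apply Rdiv_lt_0_compat; lra. }
  specialize (H N HN0).
  assert (HinvN : 0 < / INR N) by (apply Rinv_0_lt_compat, lt_0_INR; exact HN0).
  apply (Rmult_lt_compat_l (Rabs c + 1)) in HN; [|lra].
  replace ((Rabs c + 1) * ((x - y) / (Rabs c + 1))) with (x - y) in HN
    by (field; lra).
  pose proof (Rle_abs c).
  unfold Rdiv in H. nra.
Qed.

Section QuadraticDefect.

Variables (a b : R) (P : R -> R -> Prop) (Phi : R -> R -> R) (G : R -> R).

Hypothesis P_total : forall u, a <= u <= b -> exists v, P u v.
Hypothesis Phi_step : forall u1 u2 v1 v2, a <= u1 -> u1 <= u2 -> u2 <= b ->
  P u1 v1 -> P u2 v2 -> - ((u2 - u1) * (G u2 - G u1)) <= Phi u2 v2 - Phi u1 v1.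

Lemma grid_defect_bound (N : nat) (va vb : R) :
  a <= b -> (0 < N)%nat -> P a va -> P b vb ->
  Phi a va - (b - a) * (G b - G a) / INR N <= Phi b vb.
Proof.
  intros Hab HN Pa Pb.
  assert (HNpos : 0 < INR N) by (apply lt_0_INR; exact HN).
  set (d := (b - a) / INR N).
  set (u := fun k : nat => a + INR k * d).
  assert (Hd : 0 <= d) by (apply Rdiv_le_0_compat; lra).
  assert (Hu0 : u 0%nat = a) by (unfold u; simpl; ring).
  assert (HuN : u N = b) by (unfold u, d; field; lra).
  assert (Hstep : forall k, u (S k) - u k = d)
    by (intro k; unfold u; rewrite S_INR; ring).
  assert (Hrange : forall k, (k <= N)%nat -> a <= u k <= b).
  { intros k Hk. apply le_INR in Hk. pose proof (pos_INR k).
    rewrite <- HuN; unfold u; split; nra. }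
  assert (Hgrid : forall k, (k <= N)%nat -> forall v, P (u k) v ->
            Phi a va - d * (G (u k) - G a) <= Phi (u k) v).
  { induction k as [|k IH]; intros Hk v Pv.
    - rewrite Hu0 in Pv |- *.
      pose proof (Phi_step a a va v (Rle_refl a) (Rle_refl a) Hab Pa Pv); lra.
    - destruct (Hrange k ltac:(lia)) as [Hk1 Hk2].
      destruct (P_total (u k) (conj Hk1 Hk2)) as [v' Pv'].
      specialize (IH ltac:(lia) v' Pv').
      assert (Hnext : u k <= u (S k) <= b)
        by (pose proof (Hstep k); pose proof (Hrange (S k) Hk); lra).
      pose proof (Phi_step (u k) (u (S k)) v' v Hk1 (proj1 Hnext) (proj2 Hnext)
                    Pv' Pv).
      rewrite Hstep in *. lra. }
  specialize (Hgrid N (le_n N) vb ltac:(rewrite HuN; exact Pb)).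
  rewrite HuN in Hgrid.
  replace ((b - a) * (G b - G a) / INR N) with (d * (G b - G a))
    by (unfold d; field; lra).
  exact Hgrid.
Qed.

Lemma le_of_quadratic_defect (va vb : R) :
  a <= b -> P a va -> P b vb -> Phi a va <= Phi b vb.
Proof.
  intros Hab Pa Pb.
  apply (Rle_of_forall_sub_div_INR _ _ ((b - a) * (G b - G a))).
  intros N HN. exact (grid_defect_bound N va vb Hab HN Pa Pb).
Qed.

End QuadraticDefect.

Section SkewedBregmanIncrement.

Variables (Omega : R -> Prop) (f : nat -> R -> R) (t : nat) (xi : R).

Hypothesis convex_t : convex_on Omega (f t).
Hypothesis convex_t1 : convex_on Omega (f (S t)).
Hypothesis derivable_t : forall z, Omega z -> ex_derive (f t) z.
Hypothesis derivable_t1 : forall z, Omega z -> ex_derive (f (S t)) z.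
Hypothesis concave_Derive_t : concave_on Omega (Derive (f t)).
Hypothesis Derive_t1_le :
  forall z, Omega z -> Derive (f (S t)) z <= Derive (f t) z.

Lemma skewD_increment_ge (u1 u2 v1 v2 : R) :
  Omega u1 -> Omega u2 -> Omega v1 -> Omega v2 -> u1 <= u2 ->
  Derive (f (S t)) v1 = Derive (f t) u1 + xi ->
  Derive (f (S t)) v2 = Derive (f t) u2 + xi ->
  - ((u2 - u1) * (2 * Derive (f t) u2 - 2 * Derive (f t) u1))
    <= skewD f t u2 v2 - skewD f t u1 v1.
Proof.
  intros Hu1 Hu2 Hv1 Hv2 Hu E1 E2. unfold skewD.
  pose proof (convex_tangent_le Omega (f t) u1 u2 convex_t Hu1 Hu2
                (derivable_t u1 Hu1)).
  pose proof (convex_tangent_le Omega (f (S t)) v2 v1 convex_t1 Hv2 Hv1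
                (derivable_t1 v2 Hv2)).
  pose proof (concave_nondecreasing_increment_le Omega (Derive (f t)) u1 u2 v1
                concave_Derive_t
                (fun a b Ha Hb => convex_Derive_le Omega (f t) a b convex_t Ha Hb
                                    (derivable_t a Ha) (derivable_t b Hb))
                Hu1 Hu2 Hv1 Hu).
  assert (Hxi : xi * (u2 - u1)
                <= (Derive (f t) v1 - Derive (f t) u1) * (u2 - u1)).
  { pose proof (Derive_t1_le v1 Hv1). apply Rmult_le_compat_r; lra. }
  rewrite E1, E2 in *. nra.
Qed.

End SkewedBregmanIncrement.

Theorem theorem5 (Omega : R -> Prop) (f : nat -> R -> R) (t : nat)
  (HOmega : is_interval Omega)
  (HC1t : C1_on Omega (f t)) (HC1t1 : C1_on Omega (f (S t)))
  (Hsct : strictly_convex_on Omega (f t))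
  (Hsct1 : strictly_convex_on Omega (f (S t)))
  (Hdiff : forall z, Omega z -> ex_derive (Derive (f t)) z)
  (Hconc : concave_on Omega (Derive (f t)))
  (Hle : forall z, Omega z -> Derive (f (S t)) z <= Derive (f t) z) :
  forall (xi x m y n : R), Omega x -> Omega m -> Omega y -> Omega n ->
    x <= m ->
    Derive (f (S t)) y - Derive (f t) x = xi ->
    Derive (f (S t)) n - Derive (f t) m = xi ->
    skewD f t x y <= skewD f t m n.
Proof.
  intros xi x m y n Hx Hm Hy Hn Hxm Ey En.
  pose proof (strictly_convex_on_convex_on Omega (f t) Hsct) as Hconv.
  pose proof (strictly_convex_on_convex_on Omega (f (S t)) Hsct1) as Hconv1.
  assert (Hder : forall z, Omega z -> ex_derive (f t) z)
    by (intros z Hz; exact (proj1 (HC1t z Hz))).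
  assert (Hder1 : forall z, Omega z -> ex_derive (f (S t)) z)
    by (intros z Hz; exact (proj1 (HC1t1 z Hz))).
  assert (Hsub : forall u, x <= u <= m -> Omega u)
    by (intros u Hu; apply (HOmega x u m); tauto).
  apply (le_of_quadratic_defect x m
           (fun u v => Omega v /\ Derive (f (S t)) v = Derive (f t) u + xi)
           (skewD f t) (fun u => 2 * Derive (f t) u)).
  - intros u Hu.
    apply (interval_IVT Omega (Derive (f (S t))) y n);
      [exact HOmega | intros z Hz; exact (proj2 (HC1t1 z Hz)) |
       exact Hy | exact Hn |].
    pose proof (convex_Derive_le Omega (f t) x u Hconv Hx (Hsub u Hu)
                  (Hder x Hx) (Hder u (Hsub u Hu)) (proj1 Hu)).
    pose proof (convex_Derive_le Omega (f t) u m Hconv (Hsub u Hu) Hm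
                  (Hder u (Hsub u Hu)) (Hder m Hm) (proj2 Hu)).
    lra.
  - intros u1 u2 v1 v2 Hu1 Hu12 Hu2 [Hv1 E1] [Hv2 E2].
    apply (skewD_increment_ge Omega f t xi Hconv Hconv1 Hder Hder1 Hconc Hle);
      auto; apply Hsub; lra.
  - exact Hxm.
  - split; [exact Hy | lra].
  - split; [exact Hn | lra].
Qed.
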